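(* Let $\Gamma$ be a connected signed graph on $N$ vertices with signed Laplacian $\mathcal{L}$, and let $P$ be the orthogonal projection of $\mathbb{R}^N$ onto $S_{\rm fixed}$. Then the operator $P\mathcal{L}$, considered as an operator from $S_{\rm fixed}$ to $S_{\rm fixed}$, has exactly $c(\Gamma_-)-1$ negative eigenvalues, exactly one zero eigenvalue and exactly $c(\Gamma_+)-1$ positive eigenvalues, independently of the choice of edge weights (with the given signs). In particular $S_{\rm fixed}$ is a maximal subspace of fixed index, i.e. a subspace of fixed index of dimension $c(\Gamma_+)+c(\Gamma_-)-1$.
   Context: A signed graph $\Gamma$ is a finite simple undirected graph with vertex set $\{1,\dots,N\}$ in which every edge $\{i,j\}$ carries a nonzero real weight $\gamma_{ij}$, which may be of either sign ($\gamma_{ij}=0$ for non-edges). The signed Laplacian has $\mathcal{L}_{ij}=\gamma_{ij}$ for $i\ne j$ and $\mathcal{L}_{ii}=-\sum_{k\ne i}\gamma_{ik}$. $\Gamma_+$ (resp. $\Gamma_-$) is the spanning subgraph on all vertices containing exactly the positively (resp. negatively) weighted edges; $c(H)$ is the number of connected components of $H$. $S_{\rm fixed}$ is the span of the characteristic vectors (entries $1$ on the component's vertices, $0$ elsewhere) of all components of $\Gamma_+$ and all components of $\Gamma_-$. A subspace $S$ (chosen independently of the weights) is a subspace of fixed index if the operator $P_S\mathcal{L}:S\to S$ ($P_S$ the orthogonal projection onto $S$) has the same numbers of negative, zero and positive eigenvalues for every choice of weights with the given signs. *)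

From Stdlib Require Import Reals.
From HB Require Import structures.
From mathcomp Require Import all_boot all_order all_algebra.
From mathcomp Require Import Rstruct.

Set Implicit Arguments.
Unset Strict Implicit.
Unset Printing Implicit Defensive.

Import Order.TTheory GRing.Theory Num.Theory.
Local Open Scope ring_scope.

(* A signed graph on vertices 'I_N is given by its weight matrix gamma:
   gamma i j = 0 for non-edges, nonzero (of either sign) on edges;
   simple undirected: symmetric with zero diagonal. *)
Definition is_signed_graph (N : nat) (gamma : 'M[R]_N) : Prop :=
  gamma^T = gamma /\ (forall i, gamma i i = 0).

Definition edge_rel (N : nat) (gamma : 'M[R]_N) : rel 'I_N :=
  fun i j => gamma i j != 0.
Definition pos_rel (N : nat) (gamma : 'M[R]_N) : rel 'I_N :=
  fun i j => 0 < gamma i j.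
Definition neg_rel (N : nat) (gamma : 'M[R]_N) : rel 'I_N :=
  fun i j => gamma i j < 0.

Definition sg_connected (N : nat) (gamma : 'M[R]_N) : Prop :=
  forall i j, connect (edge_rel gamma) i j.

(* c(H): number of connected components of the spanning subgraph H
   (on all N vertices) with adjacency relation e *)
Definition ncomp (N : nat) (e : rel 'I_N) : nat := n_comp e 'I_N.

Definition signed_laplacian (N : nat) (gamma : 'M[R]_N) : 'M[R]_N :=
  \matrix_(i, j) (if i == j then - \sum_(k | k != i) gamma i k
                  else gamma i j).

Definition comp_vec (N : nat) (e : rel 'I_N) (i : 'I_N) : 'rV[R]_N :=
  \row_j (connect e i j)%:R.

(* A matrix whose row space is S_fixed: its rows are the characteristic
   vectors of the components of Gamma_+ (first block) and of Gamma_-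
   (second block); every component occurs (possibly several times). *)
Definition Sfixed_mx (N : nat) (gamma : 'M[R]_N) : 'M[R]_(N + N, N) :=
  col_mx (\matrix_(i < N) comp_vec (pos_rel gamma) i)
         (\matrix_(i < N) comp_vec (neg_rel gamma) i).

Definition orth_proj (m N : nat) (S : 'M[R]_(m, N)) : 'M[R]_N :=
  let B := row_base S in B^T *m invmx (B *m B^T) *m B.

(* Matrix, in the basis row_base S of the subspace S, of the operator
   P_S A : S -> S, v |-> P_S (A v).  In row-vector convention the map
   v |-> P_S A v reads x |-> x *m (P_S *m A)^T. *)
Definition restr_op (m N : nat) (S : 'M[R]_(m, N)) (A : 'M[R]_N)
  : 'M[R]_(\rank S) :=
  let B := row_base S in B *m (orth_proj S *m A)^T *m pinvmx B.

(* P_S A : S -> S has exactly nneg negative, nzero zero and npos positive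
   eigenvalues (counted with multiplicity), i.e. its characteristic
   polynomial splits over R with this multiset of roots. *)
Definition has_inertia (m N : nat) (S : 'M[R]_(m, N)) (A : 'M[R]_N)
  (nneg nzero npos : nat) : Prop :=
  exists s : seq R,
    char_poly (restr_op S A) = \prod_(x <- s) ('X - x%:P) /\
    count (fun x => x < 0) s = nneg /\
    count (fun x => x == 0) s = nzero /\
    count (fun x => 0 < x) s = npos.

Definition same_signs (N : nat) (gamma gamma' : 'M[R]_N) : Prop :=
  forall i j, Num.sg (gamma i j) = Num.sg (gamma' i j).

Definition fixed_index (m N : nat) (S : 'M[R]_(m, N)) (gamma : 'M[R]_N)
  : Prop :=
  exists nneg nzero npos : nat,
    forall gamma' : 'M[R]_N, is_signed_graph gamma' -> same_signs gamma gamma' ->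
      has_inertia S (signed_laplacian gamma') nneg nzero npos.

From Stdlib Require Import Reals.
From HB Require Import structures.
From mathcomp Require Import all_boot all_order all_algebra.
From mathcomp Require Import Rstruct complex zify ring.

Set Implicit Arguments.
Unset Strict Implicit.
Unset Printing Implicit Defensive.

Import Order.TTheory GRing.Theory Num.Theory.
Local Open Scope ring_scope.
Local Open Scope sesquilinear_scope.

(* Write [A+] and [A-] for the spans of the characteristic vectors of the
   components of Gamma_+ and Gamma_-, so S_fixed = A+ + A-.  Connectivity of
   Gamma forces A+ :&: A- to be the constants, so dim S_fixed = c+ + c- - 1.
   The quadratic form of L is q(z) = -1/2 sum_ij gamma_ij |z_i - z_j|^2.  On
   A+ the positive edges contribute nothing, so q >= 0 there with equality
   only on constants; a Courant--Fischer count for the compression of L to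
   S_fixed then gives at least c+ - 1 positive eigenvalues of P L, and
   symmetrically at least c- - 1 negative ones.  The constants lie in the
   kernel, which gives a zero eigenvalue, and the three counts add up to
   dim S_fixed, so all are equalities.  The sign pattern alone determines
   S_fixed, c+ and c-, hence the index is fixed. *)

Local Notation C := (complex R).
Local Notation toC := (real_complex R).

Lemma char_poly_conj (F : fieldType) n (T A : 'M[F]_n) :
  T \in unitmx -> char_poly (T *m A *m invmx T) = char_poly A.
Proof.
move=> Tu; rewrite /char_poly /char_poly_mx.
have -> : 'X%:M - map_mx polyC (T *m A *m invmx T) =
    map_mx polyC T *m ('X%:M - map_mx polyC A) *m map_mx polyC (invmx T).
  rewrite mulmxBr mulmxBl !map_mxM; congr (_ - _).
  rewrite mul_mx_scalar -scalemxAl -map_mxM mulmxV // map_mx1.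
  by rewrite -mul_mx_scalar mul1mx.
rewrite !det_mulmx !det_map_mx mulrC mulrA -rmorphM -det_mulmx mulVmx //.
by rewrite det1 rmorph1 mul1r.
Qed.

Lemma count_lt0_eq0_gt0 (F : realDomainType) (s : seq F) :
  (count (fun x : F => x < 0)%R s + count (fun x : F => x == 0)%R s
   + count (fun x : F => 0 < x)%R s)%N = size s.
Proof. by elim: s => //= x s <-; case: (ltrgtP x 0) => /=; lia. Qed.

Lemma real_complex_conj (x : R) : (toC x)^* = toC x.
Proof. by apply: conj_Creal; apply/complex_realP; exists x. Qed.

Lemma map_real_complex_tr m n (A : 'M[R]_(m, n)) :
  (map_mx toC A)^t* = map_mx toC A^T.
Proof. by apply/matrixP => i j; rewrite !mxE real_complex_conj. Qed.

Definition herm_form N (A : 'M[C]_N) (z : 'rV[C]_N) : C := (z *m A *m z^t*) 0 0.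

Lemma herm_formN N (A : 'M[C]_N) z : herm_form (- A) z = - herm_form A z.
Proof. by rewrite /herm_form mulmxN mulNmx mxE. Qed.

Lemma herm_form_diag n (d w : 'rV[C]_n) :
  herm_form (diag_mx d) w = \sum_i d 0 i * (w 0 i * (w 0 i)^*).
Proof.
by rewrite /herm_form mul_mx_diag mxE; apply: eq_bigr => i _; rewrite !mxE mulrCA mulrA.
Qed.

(* MathComp's spectral theorem lives over a numClosedField, hence the
   complexification; [restr_op S L] is similar to this matrix. *)
Definition compression N m (S : 'M[R]_(m, N)) (L : 'M[R]_N) : 'M[C]_(\rank S) :=
  let Q := schmidt (map_mx toC (row_base S)) in Q *m map_mx toC L *m Q^t*.

Definition restr_spectrum N m (S : 'M[R]_(m, N)) (L : 'M[R]_N) : seq R :=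
  [seq complex.Re (spectral_diag (compression S L) 0 i) | i <- enum 'I_(\rank S)].

Lemma size_restr_spectrum N m (S : 'M[R]_(m, N)) (L : 'M[R]_N) :
  size (restr_spectrum S L) = \rank S.
Proof. by rewrite size_map size_enum_ord. Qed.

Lemma restr_op_sym N m (S : 'M[R]_(m, N)) (L : 'M[R]_N) : L^T = L ->
  restr_op S L =
  row_base S *m L *m (row_base S)^T *m invmx (row_base S *m (row_base S)^T).
Proof.
move=> L_sym; rewrite /restr_op /orth_proj.
have := mulmxVp (row_base_free S); move: (row_base S) (pinvmx _) => B P BP.
rewrite !trmx_mul trmxK trmx_inv trmx_mul trmxK L_sym !mulmxA.
by rewrite -[_ *m B *m P]mulmxA BP mulmx1.
Qed.

Section Compression.
Variables (N m : nat) (S : 'M[R]_(m, N)) (L : 'M[R]_N).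
Hypothesis L_sym : L^T = L.

Let B := map_mx toC (row_base S).
Let Q := schmidt B.
Let H := compression S L.
Let U := spectralmx H.
Let d := spectral_diag H.

Let Q_unitary : Q \is unitarymx.
Proof. exact/schmidt_unitarymx/rank_leq_col. Qed.

Let eqQB : (Q :=: B)%MS.
Proof. by apply: eqmx_schmidt_free; rewrite /row_free mxrank_map; exact: row_base_free. Qed.

Let Q_sub_S : (Q <= map_mx toC S)%MS.
Proof. by rewrite eqQB map_submx eq_row_base. Qed.

(* [Q] is an orthonormal basis of the row space of [B], so [B = T Q] with [T]
   invertible, and conjugation by [T] turns [restr_op S L] into [H]. *)
Let T := B *m Q^t*.

Let BE : B = T *m Q.
Proof.
have /submxP [X BX] : (B <= Q)%MS by rewrite eqQB.
by rewrite /T BX mulmxtVK.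
Qed.

Let T_unit : T \in unitmx.
Proof.
have /submxP [Y YQ] : (Q <= B)%MS by rewrite eqQB.
have : Y *m T *m Q = 1%:M *m Q by rewrite mul1mx -mulmxA -BE.
have Q_free : row_free Q by rewrite /row_free mxrank_unitary.
by move/(row_free_inj Q_free) => /mulmx1_unit [].
Qed.

Let H_herm : H \is hermsymmx.
Proof.
apply/is_hermitianmxP; rewrite expr0 scale1r /H /compression -/B -/Q.
by rewrite !trmx_mul !map_mxM trmxCK mulmxA map_real_complex_tr L_sym.
Qed.

Let HE : H = U^t* *m diag_mx d *m U.
Proof.
rewrite -invmx_unitary ?spectral_unitarymx //.
exact/orthomx_spectralP/hermitian_normalmx.
Qed.

Let d_real i : d 0 i \is Num.real.
Proof. exact: (mxOverP (hermitian_spectral_diag_real H_herm)). Qed.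

Let map_restr_op : map_mx toC (restr_op S L) = T *m H *m invmx T.
Proof.
have -> : map_mx toC (restr_op S L) =
    B *m map_mx toC L *m B^t* *m invmx (B *m B^t*).
  rewrite restr_op_sym // /B; move: (row_base S) => B0.
  by rewrite !map_mxM map_invmx map_mxM -!map_real_complex_tr.
have QQ : Q *m Q^t* = 1%:M by apply/unitarymxP.
rewrite /H /compression -/B -/Q.
move: T_unit BE QQ; move: T Q B => T0 Q0 B0 T0_unit -> QQ.
have TT_unit : T0 *m T0^t* \in unitmx.
  by rewrite unitmx_mul T0_unit map_unitmx unitmx_tr.
rewrite !trmx_mul !map_mxM !mulmxA -[T0 *m Q0 *m Q0^t*]mulmxA QQ mulmx1.
by apply: (canLR (mulmxK TT_unit)); rewrite mulmxA mulmxKV.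
Qed.

Lemma char_poly_restr_op :
  char_poly (restr_op S L) = \prod_(x <- restr_spectrum S L) ('X - x%:P).
Proof.
apply: (map_poly_inj toC); rewrite map_char_poly map_restr_op char_poly_conj //.
have U_unit : U \in unitmx by exact: spectral_unit.
rewrite HE -invmx_unitary ?spectral_unitarymx // -{2}[U]invmxK.
rewrite char_poly_conj ?unitmx_inv // char_poly_trig ?diag_mx_is_trig //.
rewrite rmorph_prod big_map big_enum /=; apply: eq_bigr => i _.
rewrite map_polyXsubC mxE eqxx mulr1n.
by congr ('X - _%:P); apply/esym/RRe_real.
Qed.

(* [V] is spanned by the eigenvectors of [H] (rows of [U Q]) whose eigenvalue
   [x] has [a * x <= 0]. *)
Lemma herm_form_nonpos_subspace (a : R) :
  exists k (V : 'M[C]_(k, N)), [/\ (V <= map_mx toC S)%MS,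
    \rank V = count (fun x => a * x <= 0) (restr_spectrum S L) &
    forall z, (z <= V)%MS -> toC a * herm_form (map_mx toC L) z <= 0].
Proof.
pose P := [pred i : 'I_(\rank S) | a * complex.Re (d 0 i) <= 0].
pose E : 'M[C]_(#|P|, \rank S) := \matrix_(j, i) (enum_val j == i)%:R.
have E_unitary : E \is unitarymx.
  apply/unitarymxP/matrixP => j j'; rewrite mxE (bigD1 (enum_val j)) //= big1.
    by rewrite /E !mxE eqxx mul1r addr0 conjC_nat (inj_eq enum_val_inj) eq_sym.
  by move=> i /negbTE ji; rewrite /E !mxE eq_sym ji mul0r.
have V_unitary : E *m (U *m Q) \is unitarymx.
  by rewrite !mul_unitarymx ?spectral_unitarymx.
exists #|P|, (E *m (U *m Q)); split.
- exact: submx_trans (submxMl _ _) (submx_trans (submxMl _ _) Q_sub_S).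
- rewrite (mxrank_unitary V_unitary) cardE /enum_mem size_filter.
  by rewrite count_map -enumT.
move=> _ /submxP [c ->]; set w := c *m E.
have UHU : U *m H *m U^t* = diag_mx d.
  by rewrite HE !mulmxA (unitarymxP (spectral_unitarymx H)) mul1mx mulmxtVK
    ?spectral_unitarymx.
have -> : herm_form (map_mx toC L) (c *m (E *m (U *m Q))) = herm_form (diag_mx d) w.
  by rewrite -UHU /herm_form /H /compression -/B -/Q !trmx_mul !map_mxM !mulmxA.
rewrite herm_form_diag mulr_sumr; apply: sumr_le0 => i _.
have [Pi | nPi] := boolP (P i).
  rewrite mulrA mulr_le0_ge0 ?mul_conjC_ge0 // -(RRe_real (d_real i)) -rmorphM.
  by rewrite -(rmorph0 toC) lecR.
rewrite [w 0 i]mxE big1 ?mul0r ?mulr0 // => j _; rewrite !mxE.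
case: eqP => [ji|_]; last by rewrite mulr0.
by move: nPi; rewrite -ji -[P _]/(enum_val j \in P) enum_valP.
Qed.

(* Courant--Fischer count: [W] meets the nonpositive subspace [V] of
   [herm_form_nonpos_subspace] only inside [K], and [V + W <= S]. *)
Lemma rank_le_count_restr_spectrum (a : R) k (W : 'M[C]_(k, N)) l (K : 'M[C]_(l, N)) :
  (W <= map_mx toC S)%MS ->
  (forall z, (z <= W)%MS -> toC a * herm_form (map_mx toC L) z <= 0 -> (z <= K)%MS) ->
  (\rank W <= count (fun x => 0 < a * x)%R (restr_spectrum S L) + \rank K)%N.
Proof.
move=> sWS WK; have [k' [V [sVS rankV V_nonpos]]] := herm_form_nonpos_subspace a.
have sVW_K : (V :&: W <= K)%MS.
  apply/row_subP => i; have := row_sub i (V :&: W)%MS.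
  by rewrite sub_capmx => /andP [/V_nonpos zV /WK]; apply.
have rankVW : (\rank (V + W) <= \rank S)%N.
  by rewrite -(mxrank_map toC) mxrankS // addsmx_sub sVS.
have rankS : (count (fun x => 0 < a * x)%R (restr_spectrum S L)
    + count (fun x => a * x <= 0)%R (restr_spectrum S L) = \rank S)%N.
  rewrite -(size_restr_spectrum S L) -(count_predC (fun x => 0 < a * x)).
  by congr (_ + _); apply: eq_count => x; rewrite /= leNgt.
have := mxrank_sum_cap V W; have := mxrankS sVW_K; lia.
Qed.

Lemma eigenvalue0_restr_op (x : 'rV[R]_N) :
  x != 0 -> (x <= S)%MS -> x *m L = 0 -> eigenvalue (restr_op S L) 0.
Proof.
move=> x_neq0 xS xL; apply/eigenvalueP; rewrite restr_op_sym //.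
have /mulmxKpV : (x <= row_base S)%MS by rewrite eq_row_base.
move: (row_base S) (pinvmx _) => B0 P xB.
exists (x *m P); first by rewrite !mulmxA xB xL !mul0mx scale0r.
by apply: contra_neq x_neq0 => x0; rewrite -xB x0 mul0mx.
Qed.
End Compression.

Definition component_mx (F : nzRingType) N (e : rel 'I_N) : 'M[F]_N :=
  \matrix_(i, j) (connect e i j)%:R.

Definition constant_along (F : Type) N (e : rel 'I_N) (z : 'rV[F]_N) : Prop :=
  forall i j, e i j -> z 0 i = z 0 j.

Section Components.
Variables (F : fieldType) (N : nat) (e : rel 'I_N).
Hypothesis e_sym : connect_sym e.

Lemma map_component_mx (G : nzRingType) (f : {rmorphism F -> G}) :
  map_mx f (component_mx F e) = component_mx G e.
Proof. by apply/matrixP => i j; rewrite !mxE rmorph_nat. Qed.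

Lemma sub_component_mx_constant (z : 'rV[F]_N) :
  (z <= component_mx F e)%MS -> constant_along e z.
Proof.
move=> /submxP [c ->] i j eij; rewrite !mxE; apply: eq_bigr => k _.
by rewrite !mxE (same_connect_r e_sym (connect1 eij)).
Qed.

Lemma const1_sub_component_mx : ((const_mx 1 : 'rV[F]_N) <= component_mx F e)%MS.
Proof.
apply/submxP; exists (\row_k (roots e k)%:R); apply/rowP => j.
rewrite !mxE (bigD1 (fingraph.root e j)) //= !mxE (roots_root e_sym).
rewrite e_sym connect_root mul1r big1 ?addr0 // => k k_neq.
rewrite !mxE; case: (boolP (roots e k)) => [/eqP rk|]; last by rewrite mul0r.
case: (boolP (connect e k j)) => [ckj|]; last by rewrite mulr0.
by move: k_neq; rewrite -rk (fingraph.rootP e_sym ckj) eqxx.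
Qed.

Lemma rank_component_mx : \rank (component_mx F e) = n_comp e 'I_N.
Proof.
set A := component_mx F e.
pose Ar := rowsub (@enum_val _ (roots e)) A.
pose E : 'M[F]_(N, #|roots e|) := \matrix_(j, k) (j == enum_val k)%:R.
have ArE : Ar *m E = 1%:M.
  apply/matrixP => k k'; rewrite !mxE (bigD1 (enum_val k')) //= !mxE eqxx mulr1.
  rewrite big1 ?addr0 => [|j /negbTE j_neq]; last by rewrite !mxE j_neq mulr0.
  have [/eqP rk /eqP rk'] := (enum_valP k, enum_valP k').
  by rewrite -(root_connect e_sym) rk rk' (inj_eq enum_val_inj).
have rankAr : \rank Ar = #|roots e|.
  apply/eqP; rewrite eqn_leq rank_leq_row /=.
  by have := mxrankM_maxl Ar E; rewrite ArE mxrank1.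
have sAAr : (A <= Ar)%MS.
  apply/row_subP => i; have ri : fingraph.root e i \in roots e by exact: roots_root.
  have -> : row i A = row (enum_rank_in ri (fingraph.root e i)) Ar.
    apply/rowP => j; rewrite !mxE (enum_rankK_in ri) //.
    by rewrite (same_connect e_sym (connect_root e i)).
  exact: row_sub.
have -> : \rank A = \rank Ar by apply/eqP; rewrite eqn_leq !mxrankS ?rowsub_sub.
by rewrite rankAr; apply: eq_card => x; rewrite !inE andbT.
Qed.
End Components.

Lemma const_row_sub_const1 (F : fieldType) N (z : 'rV[F]_N) :
  (forall i j, z 0 i = z 0 j) -> (z <= (const_mx 1 : 'rV[F]_N))%MS.
Proof.
case: N z => [|n] z z_const; first by rewrite thinmx0 sub0mx.
have -> : z = z 0 ord0 *: const_mx 1 by apply/rowP => j; rewrite !mxE mulr1 (z_const j ord0).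
exact: scalemx_sub.
Qed.

Lemma psumr2_le0_eq0 (F : numDomainType) n (f : 'I_n -> 'I_n -> F) :
  (forall i j, 0 <= f i j) -> \sum_i \sum_j f i j <= 0 -> forall i j, f i j = 0.
Proof.
move=> f_ge0 sum_le0 i j.
have row_ge0 i' : 0 <= \sum_j f i' j by apply: sumr_ge0.
have /psumr_eq0P row_eq0 : \sum_i \sum_j f i j = 0.
  by apply/eqP; rewrite eq_le sum_le0 sumr_ge0.
by apply: (psumr_eq0P _ (row_eq0 _ _ _)).
Qed.

Lemma signed_laplacian_opp N (gamma : 'M[R]_N) :
  signed_laplacian (- gamma) = - signed_laplacian gamma.
Proof.
apply/matrixP => i j; rewrite !mxE; case: eqP => // _.
by under eq_bigr do rewrite mxE; rewrite sumrN opprK.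
Qed.

Lemma pos_rel_opp N (gamma : 'M[R]_N) : pos_rel (- gamma) =2 neg_rel gamma.
Proof. by move=> i j; rewrite /pos_rel /neg_rel mxE oppr_gt0. Qed.

Lemma neg_rel_opp N (gamma : 'M[R]_N) : neg_rel (- gamma) =2 pos_rel gamma.
Proof. by move=> i j; rewrite /pos_rel /neg_rel mxE oppr_lt0. Qed.

Section SignedLaplacian.
Variables (N : nat) (gamma : 'M[R]_N).
Hypothesis gamma_sym : gamma^T = gamma.

Let Lc := map_mx toC (signed_laplacian gamma).

Lemma gamma_symE i j : gamma j i = gamma i j.
Proof. by rewrite -[in RHS]gamma_sym mxE. Qed.

Lemma pos_rel_connect_sym : connect_sym (pos_rel gamma).
Proof. by apply: sym_connect_sym => i j; rewrite /pos_rel gamma_symE. Qed.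

Lemma neg_rel_connect_sym : connect_sym (neg_rel gamma).
Proof. by apply: sym_connect_sym => i j; rewrite /neg_rel gamma_symE. Qed.

Lemma signed_laplacian_sym : (signed_laplacian gamma)^T = signed_laplacian gamma.
Proof. by apply/matrixP => i j; rewrite !mxE eq_sym; case: eqP => [->|_] //; exact: gamma_symE. Qed.

Lemma signed_laplacianE i j :
  signed_laplacian gamma i j = gamma i j - (i == j)%:R * \sum_k gamma i k.
Proof.
rewrite mxE; case: eqP => [<-|_]; last by rewrite mul0r subr0.
by rewrite mul1r [in RHS](bigD1 i) //= opprD addNKr.
Qed.

Lemma mul_const1_signed_laplacian :
  (const_mx 1 : 'rV[R]_N) *m signed_laplacian gamma = 0.
Proof.
apply/rowP => j; rewrite !mxE (bigD1 j) //= !mxE eqxx mul1r addrC.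
under eq_bigr => i ij do rewrite !mxE mul1r (negbTE ij) gamma_symE.
by rewrite subrr.
Qed.

Lemma map_signed_laplacianE i j :
  Lc i j = toC (gamma i j) - (i == j)%:R * \sum_k toC (gamma i k).
Proof. by rewrite mxE signed_laplacianE rmorphB rmorphM rmorph_nat rmorph_sum. Qed.

Lemma herm_form_signed_laplacian (z : 'rV[C]_N) :
  2 * herm_form Lc z =
  - \sum_i \sum_j toC (gamma i j) * ((z 0 i - z 0 j) * (z 0 i - z 0 j)^*).
Proof.
pose D i j := toC (gamma i j) * (z 0 i * (z 0 i)^*).
pose E i j := toC (gamma i j) * (z 0 i * (z 0 j)^*).
have formE : herm_form Lc z = \sum_i \sum_j E i j - \sum_i \sum_j D i j.
  rewrite /herm_form mxE; transitivity (\sum_i \sum_j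
      (E i j - (i == j)%:R * (z 0 i * (\sum_k toC (gamma i k)) * (z 0 j)^*))).
    rewrite exchange_big; apply: eq_bigr => j _; rewrite !mxE mulr_suml.
    by apply: eq_bigr => i _; rewrite map_signed_laplacianE /E; ring.
  under eq_bigr do rewrite sumrB; rewrite sumrB; congr (_ - _); apply: eq_bigr => i _.
  rewrite (bigD1 i) //= eqxx mul1r [\sum_(j | j != i) _]big1 ?addr0.
    by rewrite mulr_sumr mulr_suml; apply: eq_bigr => k _; rewrite /D; ring.
  by move=> j /negbTE ij; rewrite eq_sym ij mul0r.
have termE i j : toC (gamma i j) * ((z 0 i - z 0 j) * (z 0 i - z 0 j)^*) =
    D i j + D j i - (E i j + E j i).
  by rewrite /D /E rmorphB gamma_symE; ring.
under eq_bigr do under eq_bigr do rewrite termE.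
under eq_bigr do rewrite sumrB !big_split.
rewrite sumrB !big_split /= [\sum_i \sum_j D j i]exchange_big.
by rewrite [\sum_i \sum_j E j i]exchange_big formE; ring.
Qed.

Lemma constant_along_neg_rel (z : 'rV[C]_N) :
  constant_along (pos_rel gamma) z -> herm_form Lc z <= 0 ->
  constant_along (neg_rel gamma) z.
Proof.
move=> z_pos q_le0.
pose t i j := - (toC (gamma i j) * ((z 0 i - z 0 j) * (z 0 i - z 0 j)^*)).
have t_ge0 i j : 0 <= t i j.
  rewrite /t; case: (ltrgtP (gamma i j) 0) => [g_lt0 | g_gt0 | ->].
  - by rewrite -mulNr mulr_ge0 ?mul_conjC_ge0 // oppr_ge0 -(rmorph0 toC) lecR ltW.
  - by rewrite (z_pos i j g_gt0) subrr mul0r mulr0 oppr0.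
  - by rewrite rmorph0 mul0r oppr0.
have sum_t : \sum_i \sum_j t i j = 2 * herm_form Lc z.
  by rewrite herm_form_signed_laplacian -sumrN; apply: eq_bigr => i _; rewrite -sumrN.
have t_eq0 : forall i j, t i j = 0.
  by apply: psumr2_le0_eq0 => //; rewrite sum_t mulr_ge0_le0.
move=> i j g_lt0; apply/eqP; rewrite -subr_eq0 -mul_conjC_eq0.
have /eqP := t_eq0 i j; rewrite oppr_eq0 mulf_eq0 => /orP [|//].
by rewrite -(rmorph0 toC) (inj_eq (@complexI _)) lt_eqF.
Qed.
End SignedLaplacian.

Lemma constant_along_pos_rel N (gamma : 'M[R]_N) (z : 'rV[C]_N) :
  gamma^T = gamma -> constant_along (neg_rel gamma) z ->
  0 <= herm_form (map_mx toC (signed_laplacian gamma)) z ->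
  constant_along (pos_rel gamma) z.
Proof.
move=> gamma_sym z_neg q_ge0 i j; rewrite -neg_rel_opp.
apply: constant_along_neg_rel i j; first by rewrite raddfN /= gamma_sym.
  by move=> i j; rewrite pos_rel_opp; apply: z_neg.
by rewrite signed_laplacian_opp map_mxN herm_formN oppr_le0.
Qed.

Lemma sg_connected_constant (F : fieldType) N (gamma : 'M[R]_N) (z : 'rV[F]_N) :
  sg_connected gamma -> constant_along (pos_rel gamma) z ->
  constant_along (neg_rel gamma) z -> (z <= (const_mx 1 : 'rV[F]_N))%MS.
Proof.
move=> gamma_con z_pos z_neg; apply: const_row_sub_const1 => i j.
have /connectP [p p_path ->] := gamma_con i j.
elim: p i p_path => [|k p IH] i //= /andP [e_ik /IH <-].
by move: e_ik; rewrite /edge_rel neq_lt => /orP [/z_neg | /z_pos].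
Qed.

Section Inertia.
Variables (N : nat) (gamma : 'M[R]_N).
Hypotheses (N_gt0 : (0 < N)%N) (gamma_sym : gamma^T = gamma)
  (gamma_con : sg_connected gamma).

Local Notation Ap := (component_mx R (pos_rel gamma)).
Local Notation An := (component_mx R (neg_rel gamma)).
Local Notation L := (signed_laplacian gamma).
Local Notation spec := (restr_spectrum (Sfixed_mx gamma) L).

Let pos_sym := pos_rel_connect_sym gamma_sym.
Let neg_sym := neg_rel_connect_sym gamma_sym.
Let L_sym := signed_laplacian_sym gamma_sym.

Lemma Sfixed_mxE : Sfixed_mx gamma = col_mx Ap An.
Proof. by congr col_mx; apply/matrixP => i j; rewrite !mxE. Qed.

Lemma const1_neq0 : (const_mx 1 : 'rV[R]_N) != 0.
Proof. by apply/eqP => /rowP /(_ (Ordinal N_gt0)); rewrite !mxE => /eqP; rewrite oner_eq0. Qed.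

Lemma capmx_components : (Ap :&: An :=: (const_mx 1 : 'rV[R]_N))%MS.
Proof.
apply/eqmxP/andP; split; last by rewrite sub_capmx !const1_sub_component_mx.
apply/row_subP => i.
have := row_sub i (Ap :&: An)%MS.
rewrite sub_capmx => /andP [/(sub_component_mx_constant pos_sym) z_pos].
by move/(sub_component_mx_constant neg_sym); exact: sg_connected_constant.
Qed.

Lemma rank_Sfixed_mx :
  \rank (Sfixed_mx gamma) = (ncomp (pos_rel gamma) + ncomp (neg_rel gamma) - 1)%N.
Proof.
have := mxrank_sum_cap Ap An.
rewrite capmx_components rank_rV const1_neq0 addsmxE -Sfixed_mxE.
by rewrite !rank_component_mx //; rewrite /ncomp; lia.
Qed.

Lemma ncomp_le_count (e : rel 'I_N) (a : R) : connect_sym e ->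
  (component_mx R e <= Sfixed_mx gamma)%MS ->
  (forall z : 'rV[C]_N, constant_along e z ->
     toC a * herm_form (map_mx toC L) z <= 0 -> (z <= (const_mx 1 : 'rV[C]_N))%MS) ->
  (ncomp e <= count (fun x => 0 < a * x)%R spec + 1)%N.
Proof.
move=> e_sym sAS Ae_const; rewrite /ncomp -(rank_component_mx R e_sym).
have rank1 : \rank (map_mx toC (const_mx 1 : 'rV[R]_N)) = 1%N.
  by rewrite rank_rV map_mx_eq0 const1_neq0.
rewrite -(mxrank_map toC) -[X in (_ <= _ + X)%N]rank1.
apply: rank_le_count_restr_spectrum => //; first by rewrite map_submx.
rewrite map_component_mx map_const_mx rmorph1 => z /(sub_component_mx_constant e_sym).
exact: Ae_const.
Qed.

Lemma ncomp_pos_le_count :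
  (ncomp (pos_rel gamma) <= count (fun x => 0 < x)%R spec + 1)%N.
Proof.
rewrite (eq_count (a2 := fun x => 0 < 1 * x)) => [|x]; last by rewrite mul1r.
apply: ncomp_le_count => //; first by rewrite Sfixed_mxE -addsmxE addsmxSl.
move=> z z_pos; rewrite rmorph1 mul1r => /(constant_along_neg_rel gamma_sym z_pos).
exact: sg_connected_constant z_pos.
Qed.

Lemma ncomp_neg_le_count :
  (ncomp (neg_rel gamma) <= count (fun x => x < 0)%R spec + 1)%N.
Proof.
rewrite (eq_count (a2 := fun x => 0 < -1 * x)) => [|x]; last by rewrite mulN1r oppr_gt0.
apply: ncomp_le_count => //; first by rewrite Sfixed_mxE -addsmxE addsmxSr.
move=> z z_neg; rewrite rmorphN1 mulN1r oppr_le0.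
move=> /(constant_along_pos_rel gamma_sym z_neg) z_pos.
exact: sg_connected_constant z_pos z_neg.
Qed.

Lemma count_restr_spectrum_eq0 : (0 < count (fun x => x == 0)%R spec)%N.
Proof.
rewrite -has_count has_pred1 -root_prod_XsubC -char_poly_restr_op //.
rewrite -eigenvalue_root_char; apply: (eigenvalue0_restr_op L_sym const1_neq0).
  by rewrite Sfixed_mxE -addsmxE (submx_trans _ (addsmxSl _ _)) ?const1_sub_component_mx.
exact: mul_const1_signed_laplacian.
Qed.

Lemma Sfixed_mx_inertia : has_inertia (Sfixed_mx gamma) L
  (ncomp (neg_rel gamma) - 1) 1 (ncomp (pos_rel gamma) - 1).
Proof.
exists spec; split; first exact: char_poly_restr_op.
have := count_lt0_eq0_gt0 spec; rewrite size_restr_spectrum rank_Sfixed_mx.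
have := ncomp_pos_le_count; have := ncomp_neg_le_count.
have := count_restr_spectrum_eq0.
set c_neg := count (fun x => x < 0)%R spec.
set c_zero := count (fun x => x == 0)%R spec.
set c_pos := count (fun x => 0 < x)%R spec.
lia.
Qed.
End Inertia.

Section SameSigns.
Variables (N : nat) (gamma gamma' : 'M[R]_N).
Hypothesis gamma_gamma' : same_signs gamma gamma'.

Lemma same_signs_pos_rel : pos_rel gamma' =2 pos_rel gamma.
Proof. by move=> i j; rewrite /pos_rel -sgr_gt0 -gamma_gamma' sgr_gt0. Qed.

Lemma same_signs_neg_rel : neg_rel gamma' =2 neg_rel gamma.
Proof. by move=> i j; rewrite /neg_rel -sgr_lt0 -gamma_gamma' sgr_lt0. Qed.

Lemma same_signs_edge_rel : edge_rel gamma' =2 edge_rel gamma.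
Proof. by move=> i j; rewrite /edge_rel -sgr_eq0 -gamma_gamma' sgr_eq0. Qed.

Lemma same_signs_connected : sg_connected gamma -> sg_connected gamma'.
Proof. by move=> gamma_con i j; rewrite (eq_connect same_signs_edge_rel). Qed.

Lemma same_signs_ncomp_pos : ncomp (pos_rel gamma') = ncomp (pos_rel gamma).
Proof. exact/eq_n_comp/eq_connect/same_signs_pos_rel. Qed.

Lemma same_signs_ncomp_neg : ncomp (neg_rel gamma') = ncomp (neg_rel gamma).
Proof. exact/eq_n_comp/eq_connect/same_signs_neg_rel. Qed.

Lemma same_signs_Sfixed_mx : Sfixed_mx gamma' = Sfixed_mx gamma.
Proof.
congr col_mx; apply/matrixP => i j; rewrite !mxE.
  by rewrite (eq_connect same_signs_pos_rel).
by rewrite (eq_connect same_signs_neg_rel).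
Qed.
End SameSigns.

Theorem mainTheorem9 (N : nat) (gamma : 'M[R]_N) :
  (0 < N)%N -> is_signed_graph gamma -> sg_connected gamma ->
  has_inertia (Sfixed_mx gamma) (signed_laplacian gamma)
    (ncomp (neg_rel gamma) - 1) 1 (ncomp (pos_rel gamma) - 1)
  /\ fixed_index (Sfixed_mx gamma) gamma
  /\ \rank (Sfixed_mx gamma) = (ncomp (pos_rel gamma) + ncomp (neg_rel gamma) - 1)%N.
Proof.
move=> N_gt0 [gamma_sym _] gamma_con.
split; first exact: Sfixed_mx_inertia.
split; last exact: rank_Sfixed_mx.
exists (ncomp (neg_rel gamma) - 1)%N, 1%N, (ncomp (pos_rel gamma) - 1)%N.
move=> gamma' [gamma'_sym _] same.
rewrite -(same_signs_Sfixed_mx same) -(same_signs_ncomp_pos same).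
rewrite -(same_signs_ncomp_neg same).
exact: Sfixed_mx_inertia N_gt0 gamma'_sym (same_signs_connected same gamma_con).
Qed.
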